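(* With the notation below, let $I_n=\langle x_1,\ldots,x_n\rangle\subseteq S$. Then $H_0(\mathcal{FK}_\bullet(x_1,\ldots,x_n))\cong S/I_n$ as left $S[\Theta;\varphi]$-modules, and $H_{n+1}(\mathcal{FK}_\bullet(x_1,\ldots,x_n))=0$ (i.e. $\partial_{n+1}$ is injective).
   Context: Let $\mathbb{K}$ be a commutative ring and $S=\mathbb{K}[x_1,\ldots,x_n]$. Let $\varphi:S\to S$ be a flat $\mathbb{K}$-algebra endomorphism with $\varphi(x_i)\in\langle x_i\rangle$ for each $i$, and fix nonzero $s_1,\ldots,s_n\in S$ with $\varphi(x_i)=s_ix_i$. The left skew polynomial ring $S[\Theta;\varphi]$ is the ring which is a free left $S$-module with basis $\{\Theta^i\}_{i\geq0}$ and multiplication determined by $\Theta a=\varphi(a)\Theta$ for $a\in S$. $S/I_n$ is a left $S[\Theta;\varphi]$-module with $S$ acting naturally and $\Theta$ acting by the map induced by $\varphi$ (well defined since $\varphi(I_n)\subseteq I_n$). For $J=\{j_1<\cdots<j_k\}\subseteq\{1,\ldots,n\}$ write $s_J=s_{j_1}\cdots s_{j_k}$ (with $s_\emptyset=1$) and $\mathbf{e}_J=\mathbf{e}_{j_1}\wedge\cdots\wedge\mathbf{e}_{j_k}$. The $\varphi$-Koszul complex $\mathcal{FK}_\bullet(x_1,\ldots,x_n)$ is defined as follows: for $0\leq l\leq n+1$, $\mathcal{FK}_l$ is the free left $S[\Theta;\varphi]$-module with basis $\{\mathbf{e}_I : |I|=l\}\cup\{\mathbf{e}_J\wedge u : |J|=l-1\}$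 (so $\mathcal{FK}_0=S[\Theta;\varphi]$ with basis $\mathbf{e}_\emptyset$, and $\mathcal{FK}_{n+1}$ has the single basis element $\mathbf{e}_{\{1,\ldots,n\}}\wedge u$), and $\partial_l:\mathcal{FK}_l\to\mathcal{FK}_{l-1}$ ($1\le l\le n+1$; $\partial_0=\partial_{n+2}=0$) is the left $S[\Theta;\varphi]$-linear map given on basis elements by $\partial_l(\mathbf{e}_I)=\sum_{r=1}^{l}(-1)^{r-1}x_{i_r}\,\mathbf{e}_{I\setminus\{i_r\}}$ for $I=\{i_1<\cdots<i_l\}$, and $\partial_l(\mathbf{e}_J\wedge u)=(-1)^{l-1}(\Theta-s_J)\,\mathbf{e}_J+\sum_{r=1}^{l-1}(-1)^{r-1}\varphi(x_{j_r})\,\mathbf{e}_{J\setminus\{j_r\}}\wedge u$ for $J=\{j_1<\cdots<j_{l-1}\}$ (in particular $\partial_1(u)=\Theta-1$). Homology is $H_l=\ker\partial_l/\operatorname{im}\partial_{l+1}$. *)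

From HB Require Import structures.
From mathcomp Require Import all_boot all_order all_algebra.
Set Implicit Arguments. Unset Strict Implicit. Unset Printing Implicit Defensive.
Import Order.TTheory GRing.Theory Num.Theory.
Local Open Scope ring_scope.

(* S = K[x_1,...,x_n], realised as iterated univariate polynomials. *)
Fixpoint mpoly (K : comNzRingType) (n : nat) : comNzRingType :=
  match n with
  | 0 => K
  | m.+1 => GRing.ComNzRing.clone {poly (mpoly K m)} _
  end.

Fixpoint mconst (K : comNzRingType) (n : nat) (c : K) : mpoly K n :=
  match n return mpoly K n with
  | 0 => c
  | m.+1 => ((mconst m c)%:P : {poly mpoly K m})
  end.

Fixpoint mvar (K : comNzRingType) (n : nat) (i : nat) : mpoly K n :=
  match n return mpoly K n with
  | 0 => 0
  | m.+1 => (if i == m then 'X else (mvar K m i)%:P : {poly mpoly K m})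
  end.

(* x_{i+1} for i : 'I_n *)
Definition xvar (K : comNzRingType) (n : nat) (i : 'I_n) : mpoly K n := mvar K n i.

Section Skew.
Variables (K : comNzRingType) (n : nat).
Local Notation S := (mpoly K n).
Variable phi : S -> S.

(* phi is flat (S is a flat S-module via phi), via the equational criterion:
   every relation  sum_j phi(a_j) f_j = 0  is trivial. *)
Definition flat_endo : Prop :=
  forall (k : nat) (a f : 'I_k -> S),
    \sum_(j < k) phi (a j) * f j = 0 ->
    exists (m : nat) (b : 'I_k -> 'I_m -> S) (g : 'I_m -> S),
      (forall j, f j = \sum_(l < m) phi (b j l) * g l) /\
      (forall l, \sum_(j < k) a j * b j l = 0).

(* S[Theta; phi]: elements sum_i a_i Theta^i are encoded as the polynomials
   sum_i a_i 'X^i in {poly S}; addition and left S-scaling agree, and the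
   multiplication is the skew one: (a Theta^i)(b Theta^j) = a phi^i(b) Theta^(i+j). *)
Definition skewmul (p q : {poly S}) : {poly S} :=
  \sum_(i < size p) (p`_i *: 'X^i) * map_poly (iter i phi) q.

(* action of S[Theta;phi] on S (representatives of S/I_n): Theta acts by phi *)
Definition skew_act (p : {poly S}) (f : S) : S :=
  \sum_(i < size p) p`_i * iter i phi f.

Definition In_ideal (f : S) : Prop :=
  exists g : 'I_n -> S, f = \sum_(i < n) g i * xvar K i.

(* Basis of the phi-Koszul complex: (J, false) is e_J, (J, true) is e_J /\ u.
   Its homological degree is |J| + [u present]. *)
Definition basis := ({set 'I_n} * bool)%type.
Definition bdeg (b : basis) : nat := #|b.1| + b.2.

Definition pos (I : {set 'I_n}) (i : 'I_n) : nat := #|[set j in I | (j < i)%N]|.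

Variable s : 'I_n -> S.
Definition sJ (J : {set 'I_n}) : S := \prod_(j in J) s j.

(* coefficient of the basis element g in the differential of basis element b *)
Definition bd (b g : basis) : {poly S} :=
  let I := b.1 in
  if ~~ b.2 then
    \sum_(i in I) (if g == (I :\ i, false)
                   then (-1) ^+ pos I i * (xvar K i)%:P else 0)
  else
    (if g == (I, false) then (-1) ^+ #|I| * ('X - (sJ I)%:P) else 0) +
    \sum_(i in I) (if g == (I :\ i, true)
                   then (-1) ^+ pos I i * (phi (xvar K i))%:P else 0).

(* the differential, extended left S[Theta;phi]-linearly to the direct sum of
   all FK_l; a chain is its coefficient function on the basis. *)
Definition bdmap (c : basis -> {poly S}) (g : basis) : {poly S} :=
  \sum_(b : basis) skewmul (c b) (bd b g).

(* image of partial_1 inside FK_0 = S[Theta;phi] (coefficient of e_emptyset) *)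
Definition im_d1 (p : {poly S}) : Prop :=
  exists c : basis -> {poly S},
    (forall b, bdeg b != 1%N -> c b = 0) /\ p = bdmap c (set0, false).

End Skew.

(* Isomorphism M/PM ~= N/PN of left modules over a ring acting via actM, actN,
   expressed on representatives: F induces a well-defined bijection of the
   quotients which is additive and commutes with the action. *)
Definition lmod_quot_iso (R : Type) (M N : zmodType)
    (actM : R -> M -> M) (actN : R -> N -> N)
    (PM : M -> Prop) (PN : N -> Prop) : Prop :=
  exists F : M -> N,
    [/\ forall m m', PM (m - m') <-> PN (F m - F m'),
        forall y, exists m, PN (F m - y),
        forall m m', PN (F (m + m') - (F m + F m')) &
        forall r m, PN (F (actM r m) - actN r (F m))].

(* Evaluation at Theta = 1 turns left multiplication in S[Theta; phi] into the
   action on S, and the image of partial_1 is generated by Theta - 1 and the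
   x_i; so an element of S[Theta; phi] lies in that image exactly when its
   value at 1 lies in I_n, which identifies H_0 with S/I_n.  In top degree the
   only basis element is e_[n] /\ u, and its boundary has e_[n]-coefficient
   +-(Theta - s_[n]); right multiplication by it preserves the leading
   coefficient, so partial_(n+1) is injective. *)
From HB Require Import structures.
From mathcomp Require Import all_boot all_order all_algebra.
Set Implicit Arguments. Unset Strict Implicit. Unset Printing Implicit Defensive.
Import GRing.Theory.
Local Open Scope ring_scope.

Section IterRMorphism.
Variables (R : pzSemiRingType) (f : {rmorphism R -> R}).

Lemma iter_is_nmod_morphism k : nmod_morphism (iter k f).
Proof.
by elim: k => [|k [IH0 IHD]] //; split=> [|a b] /=; rewrite ?IH0 ?IHD ?rmorph0 ?rmorphD.
Qed.

Lemma iter_is_monoid_morphism k : monoid_morphism (iter k f).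
Proof.
by elim: k => [|k [IH1 IHM]] //; split=> [|a b] /=; rewrite ?IH1 ?IHM ?rmorph1 ?rmorphM.
Qed.

HB.instance Definition _ k :=
  GRing.isNmodMorphism.Build R R (iter k f) (iter_is_nmod_morphism k).
HB.instance Definition _ k :=
  GRing.isMonoidMorphism.Build R R (iter k f) (iter_is_monoid_morphism k).

End IterRMorphism.

Section SkewPolynomials.
Variables (K : comNzRingType) (n : nat).
Local Notation S := (mpoly K n).
Variable phi : {rmorphism S -> S}.

Lemma skewmul_widen N (p r : {poly S}) : (size p <= N)%N ->
  skewmul phi p r = \sum_(i < N) (p`_i *: 'X^i) * map_poly (iter i phi) r.
Proof.
pose F i := (p`_i *: 'X^i) * map_poly (iter i phi) r.
move=> leN; rewrite /skewmul (big_ord_widen N F leN) big_mkcond.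
apply: eq_bigr => i _; case: ltnP => // le_p_i.
by rewrite nth_default // scale0r mul0r.
Qed.

Lemma skewmul0l r : skewmul phi 0 r = 0.
Proof. by rewrite /skewmul size_poly0 big_ord0. Qed.

Lemma skewmulDl p q r : skewmul phi (p + q) r = skewmul phi p r + skewmul phi q r.
Proof.
pose N := maxn (size p) (size q).
rewrite (@skewmul_widen N p) ?leq_maxl // (@skewmul_widen N q) ?leq_maxr //.
rewrite (@skewmul_widen N) ?size_polyD // -big_split.
by apply: eq_bigr => i _; rewrite coefD scalerDl mulrDl.
Qed.

Lemma skewmul_suml (I : finType) (F : I -> {poly S}) r :
  skewmul phi (\sum_(i : I) F i) r = \sum_(i : I) skewmul phi (F i) r.
Proof.
exact: (big_morph (skewmul phi ^~ r) (fun p q => skewmulDl p q r) (skewmul0l r)).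
Qed.

Lemma skewmulCl a r : skewmul phi a%:P r = a%:P * r.
Proof.
rewrite (@skewmul_widen 1) ?size_polyC ?leq_b1 // big_ord1 coefC /=.
by rewrite expr0 alg_polyC map_poly_id.
Qed.

Lemma skewmul_invariantr p r : (forall i, map_poly (iter i phi) r = r) ->
  skewmul phi p r = p * r.
Proof.
move=> r_inv; rewrite -[p in RHS]coefK poly_def mulr_suml.
by apply: eq_bigr => i _; rewrite r_inv.
Qed.

Lemma horner1_skewmul (p r : {poly S}) : (skewmul phi p r).[1] = skew_act phi p r.[1].
Proof.
rewrite horner_sum; apply: eq_bigr => i _.
by rewrite hornerM hornerZ hornerXn expr1n mulr1 -{1}(rmorph1 (iter i phi)) horner_map.
Qed.

(* Only the top term of [p] reaches degree [size p], as [r] has degree <= 1. *)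
Lemma coef_skewmul_size (p r : {poly S}) : p != 0 -> (size r <= 2)%N ->
  (skewmul phi p r)`_(size p) = lead_coef p * iter (size p).-1 phi r`_1.
Proof.
move=> p_neq0 size_r; rewrite /skewmul coef_sum /lead_coef.
have : size p != 0%N by rewrite size_poly_eq0.
case: (size p) => // d _ /=; rewrite big_ord_recr /= big1 ?add0r.
  by rewrite -scalerAl coefZ coefXnM ltnNge leqnSn /= coef_map subSnn.
move=> i _; rewrite -scalerAl coefZ coefXnM.
have lt_i_d : (i < d)%N := ltn_ord i.
rewrite ltnNge (leqW (ltnW lt_i_d)) /= coef_map.
rewrite (nth_default 0 (s := r)) ?raddf0 ?mulr0 //.
by apply: leq_trans size_r _; rewrite leq_subRL ?addn2 // leqW // ltnW.
Qed.

Lemma skewmul_sign_XsubC_eq0 (p : {poly S}) k a :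
  skewmul phi p ((-1) ^+ k * ('X - a%:P)) = 0 -> p = 0.
Proof.
have [//|p_neq0 /(congr1 (fun q : {poly S} => q`_(size p)))] := eqVneq p 0.
rewrite -signr_odd mulr_sign coef0 coef_skewmul_size //; last first.
  by case: ifP; rewrite ?size_polyN size_XsubC.
have coef1_XsubC : ('X - a%:P)`_1 = 1 by rewrite coefB coefX coefC subr0.
case: ifP => _; rewrite ?coefN coef1_XsubC ?rmorphN1 ?rmorph1 ?mulrN1 ?mulr1 ?oppr_eq0;
  by move/eqP; rewrite ?oppr_eq0 lead_coef_eq0 => /eqP.
Qed.

End SkewPolynomials.

Section Ideal.
Variables (K : comNzRingType) (n : nat).
Local Notation S := (mpoly K n).
Local Notation I := (@In_ideal K n).

Lemma In_ideal0 : I 0.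
Proof. by exists (fun _ => 0); rewrite big1 // => i _; rewrite mul0r. Qed.

Lemma In_idealD a b : I a -> I b -> I (a + b).
Proof.
move=> [g ->] [h ->]; exists (fun i => g i + h i).
by rewrite -big_split; apply: eq_bigr => i _; rewrite mulrDl.
Qed.

Lemma In_idealMl c a : I a -> I (c * a).
Proof.
move=> [g ->]; exists (fun i => c * g i).
by rewrite mulr_sumr; apply: eq_bigr => i _; rewrite mulrA.
Qed.

Lemma In_ideal_sum (T : finType) (P : pred T) (F : T -> S) :
  (forall i, P i -> I (F i)) -> I (\sum_(i | P i) F i).
Proof. exact: (big_ind I In_ideal0 In_idealD). Qed.

Lemma In_ideal_xvar i : I (xvar K i).
Proof.
exists (fun j => (j == i)%:R).
by rewrite (bigD1 i) //= eqxx mul1r big1 ?addr0 // => j /negbTE ->; rewrite mul0r.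
Qed.

Variables (phi : {rmorphism S -> S}) (s : 'I_n -> S).
Hypothesis phi_x : forall i : 'I_n, phi (xvar K i) = s i * xvar K i.

Lemma In_ideal_phi a : I a -> I (phi a).
Proof.
move=> [g ->]; exists (fun i => phi (g i) * s i).
by rewrite rmorph_sum; apply: eq_bigr => i _; rewrite rmorphM phi_x mulrA.
Qed.

Lemma In_ideal_skew_act p a : I a -> I (skew_act phi p a).
Proof.
move=> Ia; apply: In_ideal_sum => i _; apply: In_idealMl.
by elim: (nat_of_ord i) => //= k; apply: In_ideal_phi.
Qed.

End Ideal.

Section KoszulComplex.
Variables (K : comNzRingType) (n : nat).
Local Notation S := (mpoly K n).
Variables (phi : {rmorphism S -> S}) (s : 'I_n -> S).
Local Notation bd := (bd phi s).
Local Notation bdmap := (bdmap phi s).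

Lemma bdeg_eq1 (b : basis n) :
  bdeg b = 1%N -> b = (set0, true) \/ exists i, b = ([set i], false).
Proof.
case: b => J [] /=; rewrite /bdeg /= ?addn1 ?addn0.
  by case=> /eqP; rewrite cards_eq0 => /eqP ->; left.
by move=> /eqP /cards1P [i ->]; right; exists i.
Qed.

Lemma bdeg_eq_top (b : basis n) : bdeg b = n.+1 -> b = (setT, true).
Proof.
have le_card_n (J : {set 'I_n}) : (#|J| <= n)%N.
  by rewrite -[X in (_ <= X)%N]card_ord -cardsT subset_leq_card ?subsetT.
case: b => J []; rewrite /bdeg /= ?addn1 ?addn0.
  move=> [cardJ]; congr pair; apply/eqP.
  by rewrite eqEcard subsetT cardsT card_ord cardJ leqnn.
by move=> cardJ; have := le_card_n J; rewrite cardJ ltnn.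
Qed.

Lemma bd_u_empty : bd (set0, true) (set0, false) = 'X - 1.
Proof. by rewrite /bd /= eqxx big_set0 addr0 cards0 expr0 mul1r /sJ big_set0. Qed.

Lemma bd_e_single i : bd ([set i], false) (set0, false) = (xvar K i)%:P.
Proof.
have pos_i : pos [set i] i = 0%N.
  apply/eqP; rewrite cards_eq0; apply/eqP/setP => j.
  by rewrite !inE; case: eqP => // ->; rewrite ltnn.
by rewrite /bd /= big_set1 setDv eqxx pos_i expr0 mul1r.
Qed.

Lemma bd_u_diag J : bd (J, true) (J, false) = (-1) ^+ #|J| * ('X - (sJ s J)%:P).
Proof. by rewrite /bd /= eqxx big1 ?addr0 // => i _; rewrite xpair_eqE andbF. Qed.

Lemma bdmap_supported b0 c g : (forall b, b != b0 -> c b = 0) ->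
  bdmap c g = skewmul phi (c b0) (bd b0 g).
Proof.
move=> c_b0; rewrite /bdmap (bigD1 b0) //= big1 ?addr0 // => b /c_b0 ->.
exact: skewmul0l.
Qed.

Lemma sum_skewmul_delta b0 v g :
  \sum_(b : basis n) skewmul phi (if b == b0 then v else 0) (bd b g) =
  skewmul phi v (bd b0 g).
Proof.
by rewrite -[LHS]/(bdmap _ g) (@bdmap_supported b0) ?eqxx // => b /negbTE ->.
Qed.

(* A preimage of q is p (Theta - 1) + sum_i g_i e_i, where q = p ('X - 1) + q(1)
   and q(1) = sum_i g_i x_i. *)
Lemma horner1_im_d1 q : In_ideal q.[1] -> im_d1 phi s q.
Proof.
move=> [g q1E].
have [p qE] : exists p, q = p * ('X - 1) + (q.[1])%:P.
  have /factor_theorem [p Ep] : root (q - (q.[1])%:P) 1.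
    by rewrite /root hornerD hornerN hornerC subrr.
  by exists p; rewrite -Ep subrK.
pose c b := (if b == (set0, true) then p else 0) +
  \sum_i (if b == ([set i], false) then (g i)%:P else 0).
exists c; split.
  move=> b deg_b; rewrite /c big1 ?addr0 => [|i _]; case: ifP => // /eqP b_eq;
    by rewrite b_eq /bdeg ?cards0 ?cards1 in deg_b.
rewrite /bdmap; under eq_bigr do rewrite skewmulDl skewmul_suml.
rewrite big_split /= sum_skewmul_delta exchange_big /=.
under eq_bigr do rewrite sum_skewmul_delta bd_e_single skewmulCl -polyCM.
rewrite bd_u_empty skewmul_invariantr => [|i]; last by rewrite map_polyXsubC rmorph1.
by rewrite -raddf_sum -q1E -qE.
Qed.

Hypothesis phi_x : forall i : 'I_n, phi (xvar K i) = s i * xvar K i.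

Lemma im_d1_horner1 q : im_d1 phi s q -> In_ideal q.[1].
Proof.
move=> [c [c_deg1 ->]]; rewrite /bdmap horner_sum; apply: In_ideal_sum => b _.
have [/bdeg_eq1 deg_b|deg_b] := eqVneq (bdeg b) 1%N; last first.
  by rewrite c_deg1 // skewmul0l horner0; exact: In_ideal0.
rewrite horner1_skewmul; apply: In_ideal_skew_act => //.
have [->|[i ->]] := deg_b.
  by rewrite bd_u_empty hornerXsubC subrr; exact: In_ideal0.
by rewrite bd_e_single hornerC; exact: In_ideal_xvar.
Qed.

End KoszulComplex.

Theorem proposition3 (K : comNzRingType) (n : nat)
    (phi : {rmorphism mpoly K n -> mpoly K n})
    (s : 'I_n -> mpoly K n)
    (phiK : forall c : K, phi (mconst n c) = mconst n c)
    (phi_flat : flat_endo phi)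
    (phi_x : forall i : 'I_n, phi (xvar K i) = s i * xvar K i)
    (s_nz : forall i : 'I_n, s i != 0) :
  lmod_quot_iso (skewmul phi) (skew_act phi) (im_d1 phi s) (@In_ideal K n) /\
  (forall c : basis n -> {poly mpoly K n},
     (forall b, bdeg b != n.+1 -> c b = 0) ->
     (forall g, bdmap phi s c g = 0) ->
     forall b, c b = 0).
Proof.
split.
  exists (fun p => p.[1]); split=> [m m'|y|m m'|r m].
  - rewrite -hornerN -hornerD; split; [exact: im_d1_horner1 | exact: horner1_im_d1].
  - by exists y%:P; rewrite hornerC subrr; exact: In_ideal0.
  - by rewrite hornerD subrr; exact: In_ideal0.
  - by rewrite horner1_skewmul subrr; exact: In_ideal0.
move=> c c_top d_c.
have c_supp b : b != (setT, true) -> c b = 0.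
  by move=> b_ntop; apply: c_top; apply: contra_neq b_ntop; exact: bdeg_eq_top.
have c_top0 : c (setT, true) = 0.
  have := d_c (setT, false).
  by rewrite (bdmap_supported phi s _ c_supp) bd_u_diag => /skewmul_sign_XsubC_eq0.
by move=> b; have [->|/c_supp] := eqVneq b (setT, true).
Qed.
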